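(* Let $T=((\Omega,\mathcal{A}),\{(\Omega,\mathcal{M}_i)\}_{i\in N},\{t_i\}_{i\in N})$ be a type space. Then exactly one of the following holds: (a) the players' beliefs in $T$ are universally consistent; (b) $T$ admits a universal money pump.
   Context: A field on a set $X$ is a collection of subsets of $X$ containing $X$ and closed under complements and finite intersections. For a field $\mathcal{A}$ on $\Omega$, $\mathrm{pba}(\Omega,\mathcal{A})$ is the set of finitely additive nonnegative $P:\mathcal{A}\to\mathbb{R}$ with $P(\Omega)=1$; $B(\Omega,\mathcal{A})$ is the sup-norm closure of the linear span of indicators of sets in $\mathcal{A}$. $\mathrm{ba}(\Omega,\mathcal{A})$ carries the weak* topology (weakest making $\mu\mapsto\int f\,d\mu$ continuous for all $f\in B(\Omega,\mathcal{A})$); $\overline{\,\cdot\,}^\ast$ denotes weak* closure. A type space is $T=((\Omega,\mathcal{A}),\{(\Omega,\mathcal{M}_i)\}_{i\in N},\{t_i\}_{i\in N})$ with $N$ a nonempty set of players, fields $\mathcal{M}_i\subseteq\mathcal{A}$ on a set $\Omega$, and $t_i:\Omega\times\mathcal{A}\to[0,1]$ with: $t_i(\omega,\cdot)\in\mathrm{pba}(\Omega,\mathcal{A})$; $t_i(\cdot,E)\in B(\Omega,\mathcal{M}_i)$ for all $E\in\mathcal{A}$; $t_i(\omega,E)=1$ whenever $E\in\mathcal{M}_i$, $\omega\in E$. Let $\Pi_i=\overline{\mathrm{conv}\{t_i(\omega,\cdot):\omega\in\Omega\}}^\ast$ (equivalently the $P\in\mathrm{pba}(\Omega,\mathcal{A})$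 with $P(E\cap F)=\int_F t_i(\cdot,E)\,dP$ for all $E\in\mathcal{A},F\in\mathcal{M}_i$). For $I\subseteq N$, a nonempty $S\subseteq\Omega$ is an $I$-common certainty component if there is $E\in\mathcal{A}$ with $E\subseteq S$ and $t_i(\omega,E)=1$ for all $\omega\in S$, $i\in I$. A set $E$ is $I$-commonly certain at $\omega$ if there is an $I$-common certainty component $S$ with $\omega\in S\subseteq E$. Universal consistency: for every finite $I\subseteq N$ and every $I$-common certainty component $S$ there is $P\in\bigcap_{i\in I}\Pi_i$ with $\inf\{P(E):E\in\mathcal{A},S\subseteq E\}>0$. A semi-bet is a family $(f_i)_{i\in I}\subseteq B(\Omega,\mathcal{A})$, $I\subseteq N$ finite, such that for every $\omega\in\Omega$ the set $\{\omega':\int f_i\,dt_i(\omega',\cdot)\ge0\ \forall i\in I\}$ is $I$-commonly certain at $\omega$. $T$ admits a universal money pump if there exist a finite $I\subseteq N$ and an $I$-common certainty component $S$ such that for every $P\in\mathrm{pba}(\Omega,\mathcal{A})$ with $\inf\{P(E):E\in\mathcal{A},S\subseteq E\}>0$ there is a semi-bet $(f_i)_{i\in I}$ with $\int\sum_{i\in I}f_i\,dP<0$. *)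

From Stdlib Require Import Reals Lra List ClassicalEpsilon.
Import ListNotations.
Open Scope R_scope.

Section TypeSpaces.
Context {Omega : Type}.

Definition set := Omega -> Prop.
Definition setT : set := fun _ => True.
Definition setC (E : set) : set := fun x => ~ E x.
Definition setI (E F : set) : set := fun x => E x /\ F x.
Definition setU (E F : set) : set := fun x => E x \/ F x.
Definition subset (E F : set) : Prop := forall x, E x -> F x.

Definition is_field (A : set -> Prop) : Prop :=
  A setT /\ (forall E, A E -> A (setC E)) /\
  (forall E F, A E -> A F -> A (setI E F)).

Definition pba (A : set -> Prop) (P : set -> R) : Prop :=
  (forall E, A E -> 0 <= P E) /\
  (forall E F, A E -> A F -> (forall x, E x -> F x -> False) ->
     P (setU E F) = P E + P F) /\
  P setT = 1.

Definition ind (E : set) (x : Omega) : R :=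
  if excluded_middle_informative (E x) then 1 else 0.

Definition simple_eval (l : list (R * set)) (x : Omega) : R :=
  fold_right (fun p acc => fst p * ind (snd p) x + acc) 0 l.
Definition simple_int (P : set -> R) (l : list (R * set)) : R :=
  fold_right (fun p acc => fst p * P (snd p) + acc) 0 l.
Definition simple_over (A : set -> Prop) (l : list (R * set)) : Prop :=
  forall p, In p l -> A (snd p).

Definition inB (A : set -> Prop) (f : Omega -> R) : Prop :=
  forall eps, 0 < eps -> exists l, simple_over A l /\
    forall x, Rabs (f x - simple_eval l x) <= eps.

(* v is the integral of f (in B(Omega,A)) w.r.t. P (in pba(Omega,A)):
   it is within eps of the integral of every simple function
   that is eps-close to f in sup norm. For f in B and P in pba such a
   v exists and is unique, and it is the usual integral. *)
Definition is_integral (A : set -> Prop) (P : set -> R) (f : Omega -> R) (v : R) : Prop :=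
  forall eps, 0 < eps -> forall l, simple_over A l ->
    (forall x, Rabs (f x - simple_eval l x) <= eps) ->
    Rabs (v - simple_int P l) <= eps.

Definition integral (A : set -> Prop) (P : set -> R) (f : Omega -> R) : R :=
  epsilon (inhabits 0) (is_integral A P f).

Definition conv_comb (tau : Omega -> set -> R) (l : list (R * Omega)) : set -> R :=
  fun E => fold_right (fun p acc => fst p * tau (snd p) E + acc) 0 l.
Definition conv_weights (l : list (R * Omega)) : Prop :=
  (forall p, In p l -> 0 <= fst p) /\
  fold_right (fun p acc => fst p + acc) 0 l = 1.

(* Pi_i = weak* closure of conv{ t_i(omega, .) : omega in Omega }.
   (Taken within pba(Omega,A), which is weak*-closed in ba(Omega,A).)
   Basic weak* neighbourhoods: finitely many f in B(Omega,A) and eps > 0. *)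
Definition Pi (A : set -> Prop) (tau : Omega -> set -> R) (P : set -> R) : Prop :=
  pba A P /\
  forall (fs : list (Omega -> R)) eps, (forall f, In f fs -> inB A f) -> 0 < eps ->
    exists l, conv_weights l /\
      forall f, In f fs ->
        Rabs (integral A P f - integral A (conv_comb tau l) f) < eps.

Context {N : Type}.

Definition type_space (A : set -> Prop) (M : N -> set -> Prop)
    (t : N -> Omega -> set -> R) : Prop :=
  is_field A /\
  forall i,
    is_field (M i) /\ (forall E, M i E -> A E) /\
    (forall w E, A E -> 0 <= t i w E <= 1) /\
    (forall w, pba A (t i w)) /\
    (forall E, A E -> inB (M i) (fun w => t i w E)) /\
    (forall E w, M i E -> E w -> t i w E = 1).

Definition cc_component (A : set -> Prop) (t : N -> Omega -> set -> R)
    (I : list N) (S : set) : Prop :=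
  (exists x, S x) /\
  exists E, A E /\ subset E S /\
    forall w, S w -> forall i, In i I -> t i w E = 1.

Definition commonly_certain_at (A : set -> Prop) (t : N -> Omega -> set -> R)
    (I : list N) (E : set) (w : Omega) : Prop :=
  exists S, cc_component A t I S /\ S w /\ subset S E.

Definition inf_outer_pos (A : set -> Prop) (P : set -> R) (S : set) : Prop :=
  exists c, 0 < c /\ forall E, A E -> subset S E -> c <= P E.

Definition universally_consistent (A : set -> Prop) (t : N -> Omega -> set -> R) : Prop :=
  forall (I : list N) (S : set), cc_component A t I S ->
    exists P, pba A P /\ (forall i, In i I -> Pi A (t i) P) /\ inf_outer_pos A P S.

Definition semi_bet (A : set -> Prop) (t : N -> Omega -> set -> R)
    (I : list N) (f : N -> Omega -> R) : Prop :=
  (forall i, In i I -> inB A (f i)) /\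
  forall w, commonly_certain_at A t I
    (fun w' => forall i, In i I -> 0 <= integral A (t i w') (f i)) w.

Definition universal_money_pump (A : set -> Prop) (t : N -> Omega -> set -> R) : Prop :=
  exists (I : list N), NoDup I /\ exists S, cc_component A t I S /\
    forall P, pba A P -> inf_outer_pos A P S ->
      exists f : N -> Omega -> R, semi_bet A t I f /\
        integral A P (fun w => fold_right Rplus 0 (map (fun i => f i w) I)) < 0.

End TypeSpaces.

(* If the beliefs are universally consistent, take a prior P charging the component S and
   lying in every Pi_i.  A semi-bet gives each player i a nonnegative expectation under every
   belief t_i(w, .); approximating P weak* by convex combinations of these beliefs, the P-expectation
   of each f_i, hence of their sum, is nonnegative: there is no money pump.

   Conversely, if no prior in the intersection of the Pi_i charges S, every P charging S misses
   some Pi_j.  As Pi_j is the weak* closed convex hull of j's beliefs, finitely many f_1, ..., f_n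
   in B separate P from it: the vectors (E_{t_j(w, .)} f_k - E_P f_k)_k stay away from the origin.
   A point of nearly minimal norm in their convex hull gives a hyperplane strictly separating the
   hull from the origin, i.e. a bet for player j alone with nonnegative expectation at every state
   and negative P-expectation. *)

From Pilot Require Import Defs.
From Stdlib Require Import Reals List Lra.
From Stdlib Require Import Classical FunctionalExtensionality PropExtensionality ClassicalEpsilon.
Import ListNotations.
Open Scope R_scope.

Lemma le_of_le_plus_eps (a b : R) : (forall e, 0 < e -> a <= b + e) -> a <= b.
Proof.
  intro H. destruct (Rle_or_lt a b) as [h|h]; [exact h|].
  specialize (H ((a - b) / 2)). lra.
Qed.

Lemma Rabs_le_inv (x a : R) : Rabs x <= a -> - a <= x <= a.
Proof.
  intro h. pose proof (Rle_abs x). pose proof (Rle_abs (- x)). rewrite Rabs_Ropp in *. lra.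
Qed.

Lemma Rabs_sub_le (x y z a b : R) : Rabs (x - y) <= a -> Rabs (y - z) <= b -> Rabs (x - z) <= a + b.
Proof.
  intros h1 h2. replace (x - z) with ((x - y) + (y - z)) by ring.
  eapply Rle_trans; [apply Rabs_triang|lra].
Qed.

Lemma Rabs_scal_le c u d : Rabs u <= d / (Rabs c + 1) -> Rabs (c * u) <= d.
Proof.
  intro hu. pose proof (Rabs_pos c). pose proof (Rabs_pos u). rewrite Rabs_mult.
  assert (hq : d / (Rabs c + 1) * (Rabs c + 1) = d) by (field; lra).
  nra.
Qed.

Section WeightedSums.
Context {X : Type}.

Definition wsum (l : list (R * X)) (h : X -> R) : R :=
  fold_right (fun p acc => fst p * h (snd p) + acc) 0 l.
Definition wtot (l : list (R * X)) : R := fold_right (fun p acc => fst p + acc) 0 l.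
Definition scale_weights (c : R) (l : list (R * X)) : list (R * X) :=
  map (fun p => (c * fst p, snd p)) l.

Lemma wsum_app l1 l2 h : wsum (l1 ++ l2) h = wsum l1 h + wsum l2 h.
Proof. induction l1 as [|p l IH]; unfold wsum in *; simpl; [ring|rewrite IH; ring]. Qed.

Lemma wtot_app l1 l2 : wtot (l1 ++ l2) = wtot l1 + wtot l2.
Proof. induction l1 as [|p l IH]; unfold wtot in *; simpl; [ring|rewrite IH; ring]. Qed.

Lemma wsum_scale_weights c l h : wsum (scale_weights c l) h = c * wsum l h.
Proof. induction l as [|p l IH]; unfold wsum in *; simpl; [ring|rewrite IH; ring]. Qed.

Lemma wtot_scale_weights c l : wtot (scale_weights c l) = c * wtot l.
Proof. induction l as [|p l IH]; unfold wtot in *; simpl; [ring|rewrite IH; ring]. Qed.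

Lemma wsum_plus l h1 h2 : wsum l (fun x => h1 x + h2 x) = wsum l h1 + wsum l h2.
Proof. induction l as [|p l IH]; unfold wsum in *; simpl; [ring|rewrite IH; ring]. Qed.

Lemma wsum_minus l h1 h2 : wsum l (fun x => h1 x - h2 x) = wsum l h1 - wsum l h2.
Proof. induction l as [|p l IH]; unfold wsum in *; simpl; [ring|rewrite IH; ring]. Qed.

Lemma wsum_scal l c h : wsum l (fun x => c * h x) = c * wsum l h.
Proof. induction l as [|p l IH]; unfold wsum in *; simpl; [ring|rewrite IH; ring]. Qed.

Lemma wsum_ext_in l h1 h2 :
  (forall p, In p l -> h1 (snd p) = h2 (snd p)) -> wsum l h1 = wsum l h2.
Proof.
  intro H. induction l as [|p l IH]; simpl; [reflexivity|]. unfold wsum in *; simpl.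
  rewrite H by (simpl; auto). rewrite IH; [reflexivity|intros q hq; apply H; simpl; auto].
Qed.

Lemma wsum_const l c : wsum l (fun _ => c) = c * wtot l.
Proof. induction l as [|p l IH]; unfold wsum, wtot in *; simpl; [ring|rewrite IH; ring]. Qed.

Lemma wsum_nonneg l h :
  (forall p, In p l -> 0 <= fst p) -> (forall x, 0 <= h x) -> 0 <= wsum l h.
Proof.
  intros hl H. induction l as [|p l IH]; simpl; [lra|].
  assert (0 <= fst p) by (apply hl; simpl; auto).
  specialize (IH (fun q hq => hl q (or_intror hq))). specialize (H (snd p)).
  unfold wsum in *; simpl. nra.
Qed.

Lemma wsum_abs_le l h e :
  (forall p, In p l -> 0 <= fst p) -> (forall x, Rabs (h x) <= e) ->
  Rabs (wsum l h) <= e * wtot l.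
Proof.
  intros hl H. induction l as [|p l IH]; simpl.
  - unfold wsum, wtot; simpl. rewrite Rabs_R0. lra.
  - assert (0 <= fst p) by (apply hl; simpl; auto).
    specialize (IH (fun q hq => hl q (or_intror hq))). specialize (H (snd p)).
    unfold wsum, wtot in *; simpl.
    eapply Rle_trans; [apply Rabs_triang|]. rewrite Rabs_mult, (Rabs_right (fst p)) by lra.
    nra.
Qed.

Lemma conv_weights_mix l0 l s :
  0 <= s <= 1 -> conv_weights l0 -> conv_weights l ->
  conv_weights (scale_weights (1 - s) l0 ++ scale_weights s l).
Proof.
  intros hs [h0 e0] [h1 e1]. split.
  - intros q hq. apply in_app_or in hq. unfold scale_weights in hq.
    destruct hq as [hq|hq]; apply in_map_iff in hq; destruct hq as [q' [<- hq']]; simpl.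
    + apply Rmult_le_pos; [lra|auto].
    + apply Rmult_le_pos; [lra|auto].
  - change (wtot (scale_weights (1 - s) l0 ++ scale_weights s l) = 1).
    rewrite wtot_app, !wtot_scale_weights. change (wtot l0 = 1) in e0. change (wtot l = 1) in e1.
    rewrite e0, e1. ring.
Qed.

Lemma conv_weights_single (x : X) : conv_weights [(1, x)].
Proof. split; [intros q [<-|[]]; simpl; lra|simpl; ring]. Qed.

End WeightedSums.

Lemma wsum_comm {X Y : Type} (l : list (R * X)) (l' : list (R * Y)) (h : X -> Y -> R) :
  wsum l (fun x => wsum l' (h x)) = wsum l' (fun y => wsum l (fun x => h x y)).
Proof.
  induction l' as [|[c y] l' IH].
  - change (wsum l (fun _ => 0) = 0). rewrite wsum_const. ring.
  - change (wsum l (fun x => c * h x y + wsum l' (h x)) =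
            c * wsum l (fun x => h x y) + wsum l' (fun y => wsum l (fun x => h x y))).
    rewrite wsum_plus, wsum_scal, IH. reflexivity.
Qed.

Section ListSums.
Context {K : Type}.

Definition lsum (ks : list K) (h : K -> R) : R := fold_right Rplus 0 (map h ks).

Lemma lsum_cons k ks h : lsum (k :: ks) h = h k + lsum ks h.
Proof. reflexivity. Qed.

Lemma lsum_ext_in ks h1 h2 : (forall k, In k ks -> h1 k = h2 k) -> lsum ks h1 = lsum ks h2.
Proof. intro H. unfold lsum. f_equal. apply map_ext_in. exact H. Qed.

Lemma lsum_plus ks h1 h2 : lsum ks (fun k => h1 k + h2 k) = lsum ks h1 + lsum ks h2.
Proof. induction ks as [|k ks IH]; [unfold lsum; simpl; ring|]. rewrite !lsum_cons, IH. ring. Qed.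

Lemma lsum_minus ks h1 h2 : lsum ks (fun k => h1 k - h2 k) = lsum ks h1 - lsum ks h2.
Proof. induction ks as [|k ks IH]; [unfold lsum; simpl; ring|]. rewrite !lsum_cons, IH. ring. Qed.

Lemma lsum_scal ks c h : lsum ks (fun k => c * h k) = c * lsum ks h.
Proof. induction ks as [|k ks IH]; [unfold lsum; simpl; ring|]. rewrite !lsum_cons, IH. ring. Qed.

Lemma lsum_zero ks : lsum ks (fun _ => 0) = 0.
Proof. induction ks as [|k ks IH]; [reflexivity|]. rewrite lsum_cons, IH. ring. Qed.

Lemma lsum_le ks h1 h2 : (forall k, In k ks -> h1 k <= h2 k) -> lsum ks h1 <= lsum ks h2.
Proof.
  induction ks as [|k ks IH]; intro H; [unfold lsum; simpl; lra|]. rewrite !lsum_cons.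
  apply Rplus_le_compat; [apply H; simpl; auto|apply IH; intros; apply H; simpl; auto].
Qed.

Lemma lsum_nonneg ks h : (forall k, In k ks -> 0 <= h k) -> 0 <= lsum ks h.
Proof. intro H. rewrite <- (lsum_zero ks). now apply lsum_le. Qed.

Lemma lsum_term_le ks h k :
  (forall j, In j ks -> 0 <= h j) -> In k ks -> h k <= lsum ks h.
Proof.
  induction ks as [|j ks IH]; intros H hk; [destruct hk|]. rewrite lsum_cons.
  assert (0 <= h j) by (apply H; simpl; auto).
  assert (0 <= lsum ks h) by (apply lsum_nonneg; intros; apply H; simpl; auto).
  destruct hk as [<-|hk]; [lra|].
  pose proof (IH (fun i hi => H i (or_intror hi)) hk). lra.
Qed.

Lemma lsum_single (dec : forall i j : K, {i = j} + {i <> j}) ks j v :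
  NoDup ks -> In j ks -> lsum ks (fun i => if dec i j then v else 0) = v.
Proof.
  intros hnd hj. induction ks as [|i ks IH]; [destruct hj|]. rewrite lsum_cons.
  apply NoDup_cons_iff in hnd. destruct hnd as [hi hnd].
  destruct (dec i j) as [->|ne].
  - rewrite (lsum_ext_in ks _ (fun _ => 0)), lsum_zero; [ring|].
    intros k hk. destruct (dec k j) as [->|]; [contradiction|reflexivity].
  - destruct hj as [->|hj]; [contradiction|]. rewrite IH; auto. ring.
Qed.

End ListSums.

(** * Simple functions and the integral *)

Lemma set_ext {Omega : Type} (E F : @set Omega) : (forall x, E x <-> F x) -> E = F.
Proof.
  intro H. apply functional_extensionality. intro x. apply propositional_extensionality, H.
Qed.

Lemma ind_true {Omega : Type} (E : @set Omega) x : E x -> Defs.ind E x = 1.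
Proof. intro h. unfold Defs.ind. destruct (excluded_middle_informative (E x)); tauto. Qed.

Lemma ind_false {Omega : Type} (E : @set Omega) x : ~ E x -> Defs.ind E x = 0.
Proof. intro h. unfold Defs.ind. destruct (excluded_middle_informative (E x)); tauto. Qed.

Lemma simple_eval_app {Omega : Type} (l1 l2 : list (R * @set Omega)) x :
  simple_eval (l1 ++ l2) x = simple_eval l1 x + simple_eval l2 x.
Proof. exact (wsum_app l1 l2 (fun E => Defs.ind E x)). Qed.

Lemma simple_eval_scale {Omega : Type} c (l : list (R * @set Omega)) x :
  simple_eval (scale_weights c l) x = c * simple_eval l x.
Proof. exact (wsum_scale_weights c l (fun E => Defs.ind E x)). Qed.

Lemma simple_int_app {Omega : Type} P (l1 l2 : list (R * @set Omega)) :
  simple_int P (l1 ++ l2) = simple_int P l1 + simple_int P l2.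
Proof. exact (wsum_app l1 l2 P). Qed.

Lemma simple_int_scale {Omega : Type} P c (l : list (R * @set Omega)) :
  simple_int P (scale_weights c l) = c * simple_int P l.
Proof. exact (wsum_scale_weights c l P). Qed.

Lemma simple_over_app {Omega : Type} (A : @set Omega -> Prop) l1 l2 :
  simple_over A l1 -> simple_over A l2 -> simple_over A (l1 ++ l2).
Proof. intros h1 h2 p hp. apply in_app_or in hp. destruct hp; auto. Qed.

Lemma simple_over_scale {Omega : Type} (A : @set Omega -> Prop) c l :
  simple_over A l -> simple_over A (scale_weights c l).
Proof.
  intros h p hp. unfold scale_weights in hp. apply in_map_iff in hp.
  destruct hp as [q [<- hq]]. apply (h q hq).
Qed.

Lemma simple_eval_bounded {Omega : Type} (l : list (R * @set Omega)) :
  exists M, forall x, Rabs (simple_eval l x) <= M.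
Proof.
  induction l as [|[c E] l [M HM]].
  - exists 0. intro x. change (Rabs 0 <= 0). rewrite Rabs_R0. lra.
  - exists (Rabs c + M). intro x. change (Rabs (c * Defs.ind E x + simple_eval l x) <= Rabs c + M).
    eapply Rle_trans; [apply Rabs_triang|]. apply Rplus_le_compat; auto.
    rewrite Rabs_mult. unfold Defs.ind. destruct (excluded_middle_informative (E x)).
    + rewrite Rabs_R1. lra.
    + rewrite Rabs_R0. pose proof (Rabs_pos c). lra.
Qed.

Lemma simple_eval_close_plus {Omega : Type} (f g : Omega -> R) l1 l2 x d1 d2 :
  Rabs (f x - simple_eval l1 x) <= d1 -> Rabs (g x - simple_eval l2 x) <= d2 ->
  Rabs (f x + g x - simple_eval (l1 ++ l2) x) <= d1 + d2.
Proof.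
  intros c1 c2. rewrite simple_eval_app.
  replace (f x + g x - (simple_eval l1 x + simple_eval l2 x))
    with ((f x - simple_eval l1 x) + (g x - simple_eval l2 x)) by ring.
  eapply Rle_trans; [apply Rabs_triang|lra].
Qed.

Lemma simple_eval_close_scal {Omega : Type} (f : Omega -> R) c l x d :
  Rabs (f x - simple_eval l x) <= d / (Rabs c + 1) ->
  Rabs (c * f x - simple_eval (scale_weights c l) x) <= d.
Proof.
  intro cl. rewrite simple_eval_scale.
  replace (c * f x - c * simple_eval l x) with (c * (f x - simple_eval l x)) by ring.
  apply Rabs_scal_le, cl.
Qed.

Lemma inB_plus {Omega : Type} (A : @set Omega -> Prop) f g :
  inB A f -> inB A g -> inB A (fun x => f x + g x).
Proof.
  intros hf hg e he. destruct (hf (e / 2)) as [l1 [h1 c1]]; [lra|].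
  destruct (hg (e / 2)) as [l2 [h2 c2]]; [lra|].
  exists (l1 ++ l2). split; [apply simple_over_app; auto|]. intro x.
  replace e with (e / 2 + e / 2) by field. apply simple_eval_close_plus; auto.
Qed.

Lemma inB_scal {Omega : Type} (A : @set Omega -> Prop) c f :
  inB A f -> inB A (fun x => c * f x).
Proof.
  intros hf e he. assert (0 < Rabs c + 1) by (pose proof (Rabs_pos c); lra).
  destruct (hf (e / (Rabs c + 1))) as [l [hl cl]]; [apply Rdiv_lt_0_compat; lra|].
  exists (scale_weights c l). split; [apply simple_over_scale; auto|].
  intro x. apply simple_eval_close_scal, cl.
Qed.

Lemma inB_bounded {Omega : Type} (A : @set Omega -> Prop) f :
  inB A f -> exists M, forall x, Rabs (f x) <= M.
Proof.
  intro hf. destruct (hf 1 Rlt_0_1) as [l [_ hl]]. destruct (simple_eval_bounded l) as [M HM].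
  exists (1 + M). intro x. apply Rabs_le.
  pose proof (Rabs_le_inv _ _ (hl x)). pose proof (Rabs_le_inv _ _ (HM x)). lra.
Qed.

Lemma is_integral_unique {Omega : Type} (A : @set Omega -> Prop) P f v1 v2 :
  inB A f -> is_integral A P f v1 -> is_integral A P f v2 -> v1 = v2.
Proof.
  intros hf h1 h2.
  assert (close : forall e, 0 < e -> Rabs (v1 - v2) <= e).
  { intros e he. destruct (hf (e / 2)) as [l [hl cl]]; [lra|].
    specialize (h1 (e / 2) ltac:(lra) l hl cl). specialize (h2 (e / 2) ltac:(lra) l hl cl).
    rewrite Rabs_minus_sym in h2. pose proof (Rabs_sub_le _ _ _ _ _ h1 h2). lra. }
  apply Rle_antisym; apply le_of_le_plus_eps; intros e he;
    pose proof (Rabs_le_inv _ _ (close e he)); lra.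
Qed.

Lemma integral_eq {Omega : Type} (A : @set Omega -> Prop) P f v :
  inB A f -> is_integral A P f v -> integral A P f = v.
Proof.
  intros hf hv. apply (is_integral_unique A P f); auto. unfold integral. apply epsilon_spec. eauto.
Qed.

Section Integration.
Context {Omega : Type} (A : @set Omega -> Prop).
Hypothesis hA : is_field A.

Lemma field_setT : A setT.
Proof. apply hA. Qed.

Lemma field_setC E : A E -> A (setC E).
Proof. apply hA. Qed.

Lemma field_setI E F : A E -> A F -> A (setI E F).
Proof. apply hA. Qed.

Lemma simple_eval_const c x : simple_eval [(c, @setT Omega)] x = c.
Proof. change (c * Defs.ind setT x + 0 = c). rewrite ind_true by exact I. ring. Qed.

Lemma simple_over_const c : simple_over A [(c, setT)].
Proof. intros p [<-|[]]. apply field_setT. Qed.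

Lemma inB_const c : inB A (fun _ => c).
Proof.
  intros e he. exists [(c, setT)]. split; [apply simple_over_const|].
  intro x. rewrite simple_eval_const, Rminus_diag, Rabs_R0. lra.
Qed.

Section Charge.
Variable P : @set Omega -> R.
Hypothesis hP : pba A P.

Lemma pba_setT : P setT = 1.
Proof. apply hP. Qed.

Lemma pba_empty F : A F -> (forall x, ~ F x) -> P F = 0.
Proof.
  intros hF hE. destruct hP as [_ [hadd _]].
  assert (eFF : setU F F = F) by (apply set_ext; intro x; unfold setU; tauto).
  pose proof (hadd F F hF hF (fun x a _ => hE x a)) as H. rewrite eFF in H. lra.
Qed.

Lemma pba_inhabited : inhabited Omega.
Proof.
  apply NNPP. intro hn.
  assert (P setT = 0)
    by (apply pba_empty; [apply field_setT|intros x _; apply hn; constructor; exact x]).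
  pose proof pba_setT. lra.
Qed.

Lemma pba_split E F : A E -> A F -> P F = P (setI E F) + P (setI (setC E) F).
Proof.
  intros hE hF. destruct hP as [_ [hadd _]]. rewrite <- hadd.
  - f_equal. apply set_ext. intro x. unfold setU, setI, setC. destruct (classic (E x)); tauto.
  - apply field_setI; auto.
  - apply field_setI; auto. apply field_setC; auto.
  - intros x h1 h2. unfold setI, setC in *. tauto.
Qed.

Lemma pba_split_inter G E F : A G -> A E -> A F ->
  P (setI G F) = P (setI G (setI E F)) + P (setI G (setI (setC E) F)).
Proof.
  intros hG hE hF. rewrite (pba_split E (setI G F)) by (auto; apply field_setI; auto).
  f_equal; f_equal; apply set_ext; intro x; unfold setI; tauto.
Qed.

(* Induction on the simple function, splitting [F] along each of its level sets; the
   constant [a] accumulates the coefficients of the sets already known to contain [F]. *)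
Lemma simple_int_restrict_abs_le l : simple_over A l ->
  forall F a d, A F -> (forall x, F x -> Rabs (a + simple_eval l x) <= d) ->
  Rabs (a * P F + wsum l (fun E => P (setI E F))) <= d * P F.
Proof.
  induction l as [|[c E] l IH]; intros hl F a d hF H.
  - change (Rabs (a * P F + 0) <= d * P F). rewrite Rplus_0_r.
    destruct (classic (exists x, F x)) as [[x hx]|hn].
    + specialize (H x hx). change (Rabs (a + 0) <= d) in H. rewrite Rplus_0_r in H.
      pose proof (proj1 hP F hF).
      rewrite Rabs_mult, (Rabs_right (P F)) by lra. apply Rmult_le_compat_r; lra.
    + rewrite pba_empty by (auto; intros x hx; apply hn; eauto). rewrite Rmult_0_r, Rabs_R0. lra.
  - assert (hE : A E) by (apply (hl (c, E)); simpl; auto).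
    assert (hl' : simple_over A l) by (intros p hp; apply hl; simpl; auto).
    assert (hin : Rabs ((a + c) * P (setI E F) + wsum l (fun G => P (setI G (setI E F))))
                  <= d * P (setI E F)).
    { apply IH; auto; [apply field_setI; auto|]. intros x [hx1 hx2].
      specialize (H x hx2). change (Rabs (a + (c * Defs.ind E x + simple_eval l x)) <= d) in H.
      rewrite ind_true in H by auto. rewrite Rmult_1_r, <- Rplus_assoc in H. exact H. }
    assert (hout : Rabs (a * P (setI (setC E) F) + wsum l (fun G => P (setI G (setI (setC E) F))))
                   <= d * P (setI (setC E) F)).
    { apply IH; auto; [apply field_setI; auto; apply field_setC; auto|]. intros x [hx1 hx2].
      specialize (H x hx2). change (Rabs (a + (c * Defs.ind E x + simple_eval l x)) <= d) in H.
      rewrite ind_false in H by auto. rewrite Rmult_0_r, Rplus_0_l in H. exact H. }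
    change (Rabs (a * P F + (c * P (setI E F) + wsum l (fun G => P (setI G F)))) <= d * P F).
    rewrite (wsum_ext_in l _ (fun G => P (setI G (setI E F)) + P (setI G (setI (setC E) F))))
      by (intros p hp; apply pba_split_inter; auto; apply (hl p); simpl; auto).
    rewrite wsum_plus, (pba_split E F hE hF), (Rmult_plus_distr_l d).
    eapply Rle_trans; [|apply Rplus_le_compat; [exact hin|exact hout]].
    eapply Rle_trans; [|apply Rabs_triang]. right. f_equal. ring.
Qed.

Lemma simple_int_abs_le l d : simple_over A l ->
  (forall x, Rabs (simple_eval l x) <= d) -> Rabs (simple_int P l) <= d.
Proof.
  intros hl H.
  pose proof (simple_int_restrict_abs_le l hl setT 0 d field_setT) as K.
  rewrite pba_setT, Rmult_0_l, Rplus_0_l, Rmult_1_r in K.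
  replace (wsum l (fun E => P (setI E setT))) with (simple_int P l) in K.
  - apply K. intros x _. rewrite Rplus_0_l. apply H.
  - apply (wsum_ext_in l P). intros p _. f_equal. apply set_ext. intro x. unfold setI, setT. tauto.
Qed.

Lemma simple_int_close f l1 l2 e1 e2 : simple_over A l1 -> simple_over A l2 ->
  (forall x, Rabs (f x - simple_eval l1 x) <= e1) ->
  (forall x, Rabs (f x - simple_eval l2 x) <= e2) ->
  Rabs (simple_int P l1 - simple_int P l2) <= e1 + e2.
Proof.
  intros hl1 hl2 c1 c2.
  replace (simple_int P l1 - simple_int P l2) with (simple_int P (l1 ++ scale_weights (-1) l2))
    by (rewrite simple_int_app, simple_int_scale; ring).
  apply simple_int_abs_le; [apply simple_over_app; auto; apply simple_over_scale; auto|].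
  intro x. rewrite simple_eval_app, simple_eval_scale.
  specialize (c1 x). rewrite Rabs_minus_sym in c1. specialize (c2 x).
  replace (simple_eval l1 x + -1 * simple_eval l2 x)
    with (simple_eval l1 x - simple_eval l2 x) by ring.
  exact (Rabs_sub_le _ _ _ _ _ c1 c2).
Qed.

(* The integral is the supremum of the lower estimates [simple_int P l - e] over all
   simple [l] that are [e]-close to [f]. *)
Lemma is_integral_exists f : inB A f -> exists v, is_integral A P f v.
Proof.
  intros hf. destruct (hf 1 Rlt_0_1) as [l1 [hl1 c1]].
  set (L := fun r => exists e l, 0 < e /\ simple_over A l /\
     (forall x, Rabs (f x - simple_eval l x) <= e) /\ r = simple_int P l - e).
  assert (hb : bound L).
  { exists (simple_int P l1 + 1). intros r [e [l [he [hl [cl ->]]]]].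
    pose proof (Rabs_le_inv _ _ (simple_int_close f l l1 e 1 hl hl1 cl c1)). lra. }
  assert (hne : exists r, L r) by (exists (simple_int P l1 - 1), 1, l1; repeat split; auto; lra).
  destruct (completeness L hb hne) as [v [hub hlub]].
  exists v. intros eps heps l hl cl. apply Rabs_le. split.
  - enough (simple_int P l - eps <= v) by lra. apply hub. exists eps, l. auto.
  - enough (v <= simple_int P l + eps) by lra.
    apply hlub. intros r [e [l' [he [hl' [cl' ->]]]]].
    pose proof (Rabs_le_inv _ _ (simple_int_close f l' l e eps hl' hl cl' cl)). lra.
Qed.

Lemma integral_spec f : inB A f -> is_integral A P f (integral A P f).
Proof.
  intro hf. destruct (is_integral_exists f hf) as [v hv]. rewrite (integral_eq A P f v); auto.
Qed.

Lemma is_integral_of_approx f v :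
  (forall d, 0 < d -> exists l, simple_over A l /\ (forall x, Rabs (f x - simple_eval l x) <= d) /\
      Rabs (v - simple_int P l) <= d) ->
  is_integral A P f v.
Proof.
  intros H eps heps l' hl' cl'. apply le_of_le_plus_eps. intros e he.
  destruct (H (e / 2)) as [l [hl [cl hv]]]; [lra|].
  pose proof (simple_int_close f l l' (e / 2) eps hl hl' cl cl').
  pose proof (Rabs_sub_le _ _ _ _ _ hv H0). lra.
Qed.

Lemma is_integral_plus f g a b : inB A f -> inB A g ->
  is_integral A P f a -> is_integral A P g b -> is_integral A P (fun x => f x + g x) (a + b).
Proof.
  intros hf hg ha hb. apply is_integral_of_approx. intros d hd.
  destruct (hf (d / 2)) as [l1 [h1 c1]]; [lra|]. destruct (hg (d / 2)) as [l2 [h2 c2]]; [lra|].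
  exists (l1 ++ l2). split; [apply simple_over_app; auto|]. split.
  - intro x. replace d with (d / 2 + d / 2) by field. apply simple_eval_close_plus; auto.
  - rewrite simple_int_app.
    specialize (ha (d / 2) ltac:(lra) l1 h1 c1). specialize (hb (d / 2) ltac:(lra) l2 h2 c2).
    replace (a + b - (simple_int P l1 + simple_int P l2))
      with ((a - simple_int P l1) + (b - simple_int P l2)) by ring.
    eapply Rle_trans; [apply Rabs_triang|lra].
Qed.

Lemma is_integral_scal c f a : inB A f ->
  is_integral A P f a -> is_integral A P (fun x => c * f x) (c * a).
Proof.
  intros hf ha. apply is_integral_of_approx. intros d hd.
  assert (0 < Rabs c + 1) by (pose proof (Rabs_pos c); lra).
  assert (hd' : 0 < d / (Rabs c + 1)) by (apply Rdiv_lt_0_compat; lra).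
  destruct (hf _ hd') as [l [hl cl]].
  exists (scale_weights c l). split; [apply simple_over_scale; auto|]. split.
  - intro x. apply simple_eval_close_scal, cl.
  - rewrite simple_int_scale. specialize (ha _ hd' l hl cl).
    replace (c * a - c * simple_int P l) with (c * (a - simple_int P l)) by ring.
    apply Rabs_scal_le, ha.
Qed.

Lemma is_integral_const c : is_integral A P (fun _ => c) c.
Proof.
  apply is_integral_of_approx. intros d hd. exists [(c, setT)].
  split; [apply simple_over_const|]. split.
  - intro x. rewrite simple_eval_const, Rminus_diag, Rabs_R0. lra.
  - change (Rabs (c - (c * P setT + 0)) <= d). rewrite pba_setT, Rmult_1_r, Rplus_0_r,
      Rminus_diag, Rabs_R0. lra.
Qed.

Lemma integral_plus f g : inB A f -> inB A g ->
  integral A P (fun x => f x + g x) = integral A P f + integral A P g.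
Proof.
  intros hf hg. apply integral_eq; [apply inB_plus; auto|].
  apply is_integral_plus; auto; apply integral_spec; auto.
Qed.

Lemma integral_scal c f : inB A f -> integral A P (fun x => c * f x) = c * integral A P f.
Proof.
  intro hf. apply integral_eq; [apply inB_scal; auto|]. apply is_integral_scal; auto.
  apply integral_spec; auto.
Qed.

Lemma integral_const c : integral A P (fun _ => c) = c.
Proof. apply integral_eq; [apply inB_const|apply is_integral_const]. Qed.

Lemma integral_sub_const f c : inB A f -> integral A P (fun x => f x - c) = integral A P f - c.
Proof.
  intro hf. apply integral_eq.
  - exact (inB_plus A f (fun _ => - c) hf (inB_const (- c))).
  - exact (is_integral_plus f (fun _ => - c) _ _ hf (inB_const _) (integral_spec f hf)
             (is_integral_const (- c))).
Qed.

Lemma integral_abs_le f M : inB A f -> (forall x, Rabs (f x) <= M) -> Rabs (integral A P f) <= M.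
Proof.
  intros hf HM. apply le_of_le_plus_eps. intros e he.
  destruct (hf (e / 2)) as [l [hl cl]]; [lra|].
  pose proof (Rabs_le_inv _ _ (integral_spec f hf (e / 2) ltac:(lra) l hl cl)).
  assert (hs : Rabs (simple_int P l) <= M + e / 2).
  { apply simple_int_abs_le; auto. intro x. apply Rabs_le.
    pose proof (Rabs_le_inv _ _ (cl x)). pose proof (Rabs_le_inv _ _ (HM x)). lra. }
  apply Rabs_le. pose proof (Rabs_le_inv _ _ hs). lra.
Qed.

Lemma integral_lsum {K : Type} (ks : list K) (F : K -> Omega -> R) :
  (forall k, In k ks -> inB A (F k)) ->
  inB A (fun x => lsum ks (fun k => F k x)) /\
  integral A P (fun x => lsum ks (fun k => F k x)) = lsum ks (fun k => integral A P (F k)).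
Proof.
  induction ks as [|k ks IH]; intro hF.
  - split; [exact (inB_const 0)|exact (integral_const 0)].
  - assert (hk : inB A (F k)) by (apply hF; simpl; auto).
    destruct IH as [hB hI]; [intros j hj; apply hF; simpl; auto|].
    split; [apply (inB_plus A (F k)); auto|].
    rewrite lsum_cons, <- hI. apply (integral_plus (F k)); auto.
Qed.

Lemma integral_linear_combination {K : Type} (ks : list K) (F : K -> Omega -> R) (y : K -> R) c :
  (forall k, In k ks -> inB A (F k)) ->
  inB A (fun x => lsum ks (fun k => y k * F k x) - c) /\
  integral A P (fun x => lsum ks (fun k => y k * F k x) - c) =
    lsum ks (fun k => y k * integral A P (F k)) - c.
Proof.
  intro hF.
  destruct (integral_lsum ks (fun k x => y k * F k x)) as [hB hI];
    [intros k hk; apply inB_scal; auto|].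
  split; [exact (inB_plus A _ (fun _ => - c) hB (inB_const (- c)))|].
  rewrite integral_sub_const, hI by exact hB. f_equal.
  apply lsum_ext_in. intros k hk. apply integral_scal; auto.
Qed.

End Charge.
End Integration.

Lemma integral_conv_comb {Omega : Type} (A : @set Omega -> Prop) tau f l :
  is_field A -> (forall w, pba A (tau w)) -> inB A f -> conv_weights l ->
  integral A (conv_comb tau l) f = wsum l (fun w => integral A (tau w) f).
Proof.
  intros hA htau hf [hl0 hl1]. apply integral_eq; auto. intros eps heps l' hl' cl'.
  change (simple_int (conv_comb tau l) l') with (wsum l' (fun E => wsum l (fun w => tau w E))).
  rewrite <- wsum_comm.
  replace (wsum l (fun w => integral A (tau w) f) - wsum l (fun w => wsum l' (tau w)))
    with (wsum l (fun w => integral A (tau w) f - wsum l' (tau w))) by apply wsum_minus.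
  replace eps with (eps * wtot l) by (change (wtot l = 1) in hl1; rewrite hl1; ring).
  apply wsum_abs_le; auto. intro w.
  exact (integral_spec A hA (tau w) (htau w) f hf eps heps l' hl' cl').
Qed.

(** * Separating the origin from a convex hull *)

Lemma inf_approx {X : Type} (D : X -> Prop) (phi : X -> R) c x0 :
  D x0 -> (forall x, D x -> c <= phi x) ->
  exists m, c <= m /\ (forall x, D x -> m <= phi x) /\
    forall d, 0 < d -> exists x, D x /\ phi x <= m + d.
Proof.
  intros hx0 hc.
  set (L := fun r => exists x, D x /\ r = - phi x).
  assert (hb : bound L) by (exists (- c); intros r [x [hx ->]]; specialize (hc x hx); lra).
  destruct (completeness L hb (ex_intro _ (- phi x0) (ex_intro _ x0 (conj hx0 eq_refl))))
    as [m' [hub hlub]].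
  exists (- m'). split; [|split].
  - enough (m' <= - c) by lra. apply hlub. intros r [x [hx ->]]. specialize (hc x hx). lra.
  - intros x hx. enough (- phi x <= m') by lra. apply hub. exists x. auto.
  - intros d hd. apply NNPP. intro hn. enough (m' <= m' - d) by lra.
    apply hlub. intros r [x [hx ->]]. apply Rnot_lt_le. intro hlt.
    apply hn. exists x. split; [exact hx|lra].
Qed.

Section Separation.
Context {W K : Type} (ks : list K) (x : K -> W -> R) (B : K -> R).
Hypothesis hB : forall k, In k ks -> forall w, Rabs (x k w) <= B k.

Definition hull_point (l : list (R * W)) (k : K) : R := wsum l (x k).
Definition sqnorm (u : K -> R) : R := lsum ks (fun k => u k ^ 2).
Definition dot (u v : K -> R) : R := lsum ks (fun k => u k * v k).

Lemma hull_point_abs_le l k : In k ks -> conv_weights l -> Rabs (hull_point l k) <= B k.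
Proof.
  intros hk [hl0 hl1]. unfold hull_point.
  replace (B k) with (B k * wtot l) by (change (wtot l = 1) in hl1; rewrite hl1; ring).
  apply wsum_abs_le; auto.
Qed.

Lemma hull_point_mix l0 l s k :
  hull_point (scale_weights (1 - s) l0 ++ scale_weights s l) k =
  (1 - s) * hull_point l0 k + s * hull_point l k.
Proof. unfold hull_point. rewrite wsum_app, !wsum_scale_weights. reflexivity. Qed.

Lemma sqnorm_mix l0 l s :
  sqnorm (hull_point (scale_weights (1 - s) l0 ++ scale_weights s l)) =
  (1 - 2 * s) * sqnorm (hull_point l0) + 2 * s * dot (hull_point l0) (hull_point l) +
  s ^ 2 * lsum ks (fun k => (hull_point l k - hull_point l0 k) ^ 2).
Proof.
  unfold sqnorm, dot. rewrite <- !lsum_scal, <- !lsum_plus. apply lsum_ext_in. intros k _.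
  rewrite hull_point_mix. ring.
Qed.

Definition sep_radius : R := lsum ks (fun k => 4 * B k ^ 2).

(* Moving from a near-minimal point [u] of the convex hull towards any other point [v] by
   the step [s] cannot decrease the norm much, which forces [<u, v>] to be large. *)
Lemma near_minimizer_separates d2 l0 :
  0 < d2 -> (forall l, conv_weights l -> d2 <= sqnorm (hull_point l)) -> conv_weights l0 ->
  let s := d2 / (2 * (sep_radius + d2)) in
  sqnorm (hull_point l0) <= d2 + s * d2 / 2 ->
  forall l, conv_weights l -> d2 / 2 <= dot (hull_point l0) (hull_point l).
Proof.
  intros hd2 hmin hl0 s hnear l hl.
  assert (hR : 0 <= sep_radius) by (apply lsum_nonneg; intros; nra).
  assert (hs : s * (2 * (sep_radius + d2)) = d2) by (unfold s; field; lra).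
  assert (hs0 : 0 < s) by (unfold s; apply Rdiv_lt_0_compat; lra).
  assert (hS3 : lsum ks (fun k => (hull_point l k - hull_point l0 k) ^ 2) <= sep_radius).
  { apply lsum_le. intros k hk.
    pose proof (Rabs_le_inv _ _ (hull_point_abs_le l k hk hl)).
    pose proof (Rabs_le_inv _ _ (hull_point_abs_le l0 k hk hl0)).
    nra. }
  pose proof (hmin _ (conv_weights_mix l0 l s ltac:(nra) hl0 hl)) as hmix.
  rewrite sqnorm_mix in hmix.
  assert (hS3' : s ^ 2 * lsum ks (fun k => (hull_point l k - hull_point l0 k) ^ 2)
                 <= s ^ 2 * sep_radius)
    by (apply Rmult_le_compat_l; nra).
  assert (hS1 : (1 - 2 * s) * sqnorm (hull_point l0) <= (1 - 2 * s) * (d2 + s * d2 / 2))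
    by (apply Rmult_le_compat_l; nra).
  assert (hsR : s ^ 2 * sep_radius = s * d2 / 2 - s ^ 2 * d2) by nra.
  assert (hd2s : 0 <= s ^ 2 * d2) by nra.
  apply (Rmult_le_reg_l (2 * s)); [lra|]. nra.
Qed.

Theorem convex_hull_separation (w0 : W) eps :
  0 < eps -> (forall l, conv_weights l -> exists k, In k ks /\ eps <= Rabs (hull_point l k)) ->
  exists y g, 0 < g /\ forall w, g <= lsum ks (fun k => y k * x k w).
Proof.
  intros heps Hsep.
  assert (hlow : forall l, conv_weights l -> eps ^ 2 <= sqnorm (hull_point l)).
  { intros l hl. destruct (Hsep l hl) as [k [hk hek]].
    apply Rle_trans with (hull_point l k ^ 2).
    - rewrite <- (pow2_abs (hull_point l k)). apply pow_incr. split; lra.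
    - apply (lsum_term_le ks (fun k => hull_point l k ^ 2)); auto. intros; nra. }
  destruct (inf_approx conv_weights (fun l => sqnorm (hull_point l)) (eps ^ 2) [(1, w0)]
              (conv_weights_single w0) hlow) as [d2 [hd2 [hmin happrox]]].
  assert (hd2pos : 0 < d2) by nra.
  set (s := d2 / (2 * (sep_radius + d2))).
  assert (hR : 0 <= sep_radius) by (apply lsum_nonneg; intros; nra).
  destruct (happrox (s * d2 / 2)) as [l0 [hl0 hnear]].
  { unfold s. apply Rmult_lt_0_compat; [|lra]. apply Rmult_lt_0_compat; [|lra].
    apply Rdiv_lt_0_compat; lra. }
  exists (hull_point l0), (d2 / 2). split; [lra|]. intro w.
  eapply Rle_trans;
    [exact (near_minimizer_separates d2 l0 hd2pos hmin hl0 hnear _ (conv_weights_single w))|].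
  right. apply lsum_ext_in. intros k _. unfold hull_point, wsum. simpl. ring.
Qed.

End Separation.

(** * Bets against belief hulls *)

Section BeliefHull.
Context {Omega : Type} (A : @set Omega -> Prop) (tau : Omega -> @set Omega -> R).
Hypothesis hA : is_field A.
Hypothesis htau : forall w, pba A (tau w).

Lemma Pi_integral_nonneg P f : Pi A tau P -> inB A f ->
  (forall w, 0 <= integral A (tau w) f) -> 0 <= integral A P f.
Proof.
  intros [_ hP] hf hnn. apply le_of_le_plus_eps. intros e he.
  destruct (hP [f] e) as [l [hl hclose]]; [intros g [<-|[]]; exact hf|exact he|].
  specialize (hclose f (or_introl eq_refl)).
  rewrite (integral_conv_comb A tau f l hA htau hf hl) in hclose.
  pose proof (wsum_nonneg l _ (proj1 hl) hnn).
  pose proof (Rabs_le_inv _ _ (Rlt_le _ _ hclose)). lra.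
Qed.

Lemma not_Pi_witness P : pba A P -> ~ Pi A tau P ->
  exists fs eps, (forall f, In f fs -> inB A f) /\ 0 < eps /\
    forall l, conv_weights l ->
      exists f, In f fs /\ eps <= Rabs (integral A (conv_comb tau l) f - integral A P f).
Proof.
  intros hP hnPi. apply NNPP. intro hn. apply hnPi. split; [exact hP|].
  intros fs eps hfs heps. apply NNPP. intro hn2. apply hn. exists fs, eps. repeat split; auto.
  intros l hl. apply NNPP. intro hn3. apply hn2. exists l. split; [exact hl|].
  intros f hf. apply Rnot_le_lt. intro hle. apply hn3. exists f. rewrite Rabs_minus_sym. auto.
Qed.

(* The bet is [sum_f y_f (f - E_P f) - g], where [y] strictly separates the vectors
   [(E_{tau w} f - E_P f)_{f in fs}], w in Omega, from the origin. *)
Lemma not_Pi_separating_bet P : pba A P -> ~ Pi A tau P ->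
  exists f, inB A f /\ (forall w, 0 <= integral A (tau w) f) /\ integral A P f < 0.
Proof.
  intros hP hnPi.
  destruct (not_Pi_witness P hP hnPi) as [fs [eps [hfs [heps Hsep]]]].
  destruct (pba_inhabited A hA P hP) as [w0].
  set (x := fun f w => integral A (tau w) f - integral A P f).
  destruct (choice (fun f b => In f fs -> forall w, Rabs (x f w) <= b)) as [B hB].
  { intro f. destruct (classic (In f fs)) as [hf|hf]; [|exists 0; tauto].
    destruct (inB_bounded A f (hfs f hf)) as [M hM].
    exists (M + Rabs (integral A P f)). intros _ w. unfold x. unfold Rminus.
    eapply Rle_trans; [apply Rabs_triang|]. rewrite Rabs_Ropp.
    apply Rplus_le_compat_r, integral_abs_le; auto. }
  destruct (convex_hull_separation fs x B hB w0 eps heps) as [y [g [hg hy]]].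
  { intros l hl. destruct (Hsep l hl) as [f [hf hfe]]. exists f. split; [exact hf|].
    unfold hull_point, x.
    rewrite wsum_minus, wsum_const, <- (integral_conv_comb A tau f l hA htau (hfs f hf) hl).
    destruct hl as [_ hl1]. change (wtot l = 1) in hl1. rewrite hl1, Rmult_1_r. exact hfe. }
  set (c := lsum fs (fun f => y f * integral A P f) + g).
  assert (hbet : forall Q, pba A Q ->
    inB A (fun w => lsum fs (fun f => y f * f w) - c) /\
    integral A Q (fun w => lsum fs (fun f => y f * f w) - c) =
      lsum fs (fun f => y f * integral A Q f) - c)
    by (intros Q hQ; apply (integral_linear_combination A hA Q hQ fs (fun f => f)); exact hfs).
  exists (fun w => lsum fs (fun f => y f * f w) - c). split; [|split].
  - exact (proj1 (hbet P hP)).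
  - intro w. rewrite (proj2 (hbet _ (htau w))). specialize (hy w).
    rewrite (lsum_ext_in fs _ (fun f => y f * integral A (tau w) f - y f * integral A P f)),
      lsum_minus in hy by (intros f _; unfold x; ring).
    unfold c. lra.
  - rewrite (proj2 (hbet P hP)). unfold c. lra.
Qed.

End BeliefHull.

Section TypeSpace.
Context {Omega N : Type} (A : @set Omega -> Prop) (t : N -> Omega -> @set Omega -> R).
Hypothesis hA : is_field A.
Hypothesis ht : forall i w, pba A (t i w).

Lemma commonly_certain_everywhere I E w : (forall x, E x) -> commonly_certain_at A t I E w.
Proof.
  intro hE. exists setT. split; [|split; [exact Logic.I|intros x _; apply hE]].
  split; [exists w; exact Logic.I|]. exists setT. split; [apply field_setT; exact hA|].
  split; [intros x hx; exact hx|]. intros w' _ i _. apply (pba_setT A (t i w')), ht.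
Qed.

Lemma semi_bet_integral_nonneg I f i w :
  semi_bet A t I f -> In i I -> 0 <= integral A (t i w) (f i).
Proof. intros [_ hcert] hi. destruct (hcert w) as [S [_ [hw hsub]]]. exact (hsub w hw i hi). Qed.

Lemma consistent_no_money_pump : universally_consistent A t -> ~ universal_money_pump A t.
Proof.
  intros hUC [I [_ [S [hS hpump]]]].
  destruct (hUC I S hS) as [P [hP [hPi hpos]]].
  destruct (hpump P hP hpos) as [f [hbet hneg]].
  destruct (integral_lsum A hA P hP I f (proj1 hbet)) as [_ hsum].
  change (integral A P (fun w => lsum I (fun i => f i w)) < 0) in hneg.
  rewrite hsum in hneg.
  enough (0 <= lsum I (fun i => integral A P (f i))) by lra.
  apply lsum_nonneg. intros i hi.
  apply (Pi_integral_nonneg A (t i) hA (ht i) P (f i) (hPi i hi) (proj1 hbet i hi)).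
  intro w. exact (semi_bet_integral_nonneg I f i w hbet hi).
Qed.

Lemma cc_component_incl I I' S : incl I' I -> cc_component A t I S -> cc_component A t I' S.
Proof.
  intros hI [hne [E [hE [hES hc]]]]. split; [exact hne|].
  exists E. split; [exact hE|split; [exact hES|]].
  intros w hw i hi. apply hc; [exact hw|apply hI, hi].
Qed.

Lemma single_player_semi_bet (dec : forall i j : N, {i = j} + {i <> j}) I j f :
  inB A f -> (forall w, 0 <= integral A (t j w) f) ->
  semi_bet A t I (fun i w => if dec i j then f w else 0).
Proof.
  intros hf hnn. split.
  - intros i _. destruct (dec i j); [exact hf|apply inB_const; exact hA].
  - intro w. apply commonly_certain_everywhere. intros w' i _.
    destruct (dec i j) as [->|]; [apply hnn|].
    rewrite (integral_const A hA _ (ht i w')). lra.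
Qed.

Lemma inconsistent_money_pump : ~ universally_consistent A t -> universal_money_pump A t.
Proof.
  intro hnUC. unfold universally_consistent in hnUC.
  apply not_all_ex_not in hnUC as [I hnUC]. apply not_all_ex_not in hnUC as [S hnUC].
  apply imply_to_and in hnUC as [hS hnoP].
  set (dec := fun i j : N => excluded_middle_informative (i = j)).
  exists (nodup dec I). split; [apply NoDup_nodup|]. exists S. split.
  { apply (cc_component_incl I); [intros i; apply nodup_In|exact hS]. }
  intros P hP hpos.
  assert (hj : exists j, In j I /\ ~ Pi A (t j) P).
  { apply NNPP. intro hn. apply hnoP. exists P. split; [exact hP|split; [|exact hpos]].
    intros i hi. apply NNPP. intro. apply hn. eauto. }
  destruct hj as [j [hj hnPi]].
  destruct (not_Pi_separating_bet A (t j) hA (ht j) P hP hnPi) as [f [hf [hnn hneg]]].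
  exists (fun i w => if dec i j then f w else 0).
  split; [apply single_player_semi_bet; auto|].
  assert (hsum : forall w, lsum (nodup dec I) (fun i => if dec i j then f w else 0) = f w)
    by (intro w; apply lsum_single; [apply NoDup_nodup|apply nodup_In; exact hj]).
  change (integral A P (fun w => lsum (nodup dec I) (fun i => if dec i j then f w else 0)) < 0).
  rewrite (functional_extensionality _ f hsum). exact hneg.
Qed.

End TypeSpace.

Theorem theorem5 (Omega N : Type) (A : @set Omega -> Prop)
  (M : N -> @set Omega -> Prop) (t : N -> Omega -> @set Omega -> R) :
  inhabited N ->
  type_space A M t ->
  (universally_consistent A t /\ ~ universal_money_pump A t) \/
  (~ universally_consistent A t /\ universal_money_pump A t).
Proof.
  intros _ [hA hT].
  assert (ht : forall i w, pba A (t i w)) by (intros i w; apply hT).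
  destruct (classic (universally_consistent A t)) as [hUC|hnUC].
  - left. split; [exact hUC|exact (consistent_no_money_pump A t hA ht hUC)].
  - right. split; [exact hnUC|exact (inconsistent_money_pump A t hA ht hnUC)].
Qed.
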